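(* Let $p,q$ be integers with $0\le p<q$ and let $n\ge 1$. Then $$\operatorname{Card}\{F_n^{p,q}\}=\sum_{k=0}^{\lfloor \frac{n-p}{q}\rfloor}\left[\binom{2n-(kq+p)-1}{n-1}-\binom{2n-(kq+p)-1}{n}\right].$$
   Context: A Dyck (Catalan) path of semilength $n$ is a lattice path from $(0,0)$ to $(2n,0)$ with steps $(1,1)$ and $(1,-1)$ that never goes below the $x$-axis. Its first rise is the length of its maximal initial run of $(1,1)$ steps. For integers $0\le p<q$, the set $F_n^{p,q}$ of generalized Fine sequences on $[n]$ congruous $q$ modulo $p$ is the set of Dyck paths of semilength $n$ whose first rise equals $kq+p$ for some integer $k\ge 0$. *)

From mathcomp Require Import all_boot all_order all_algebra.
Set Implicit Arguments. Unset Strict Implicit. Unset Printing Implicit Defensive.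

(* A lattice path of length m is encoded as a sequence of booleans:
   true = up-step (1,1), false = down-step (1,-1). *)

Definition height (s : seq bool) : int :=
  (count id s)%:Z - (count negb s)%:Z.

Definition is_dyck (s : seq bool) : bool :=
  (height s == 0%R) && [forall i : 'I_(size s).+1, (0 <= height (take i s))%R].

Definition first_rise (s : seq bool) : nat := find negb s.

Definition F_set (n p q : nat) : {set (2 * n).-tuple bool} :=
  [set t : (2 * n).-tuple bool |
     is_dyck t && [exists k : 'I_(2 * n).+1, first_rise t == k * q + p]].

(* A Dyck path of semilength n whose first rise is r consists of r up-steps,
   one down-step, and then a path of length 2n - r - 1 from height r - 1 down
   to 0 that never goes below the axis.  Paths with u up-steps and d >= u - 1
   down-steps ending at 0 in this way are counted by the ballot number
   C(u + d, d) - C(u + d, d + 1), by induction on the length with Pascal's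
   rule; here d = n - 1 and u = n - r.  Summing over the admissible first
   rises r = kq + p <= n gives the formula.  The case r = 0 needs no special
   treatment: the remainder would start at height -1, and both sides vanish. *)

From mathcomp Require Import all_boot all_order all_algebra.
From mathcomp Require Import zify.

Set Implicit Arguments.
Unset Strict Implicit.
Unset Printing Implicit Defensive.

Import GRing.Theory.

Section BigTuple.
Variables (R : Type) (idx : R) (op : Monoid.com_law idx) (T : finType).

Lemma big_tuple_nil (F : seq T -> R) :
  \big[op/idx]_(t : 0.-tuple T) F t = F [::].
Proof. by rewrite (big_pred1 [tuple]) // => t; apply/esym/eqP; exact: tuple0. Qed.

Lemma big_tuple_cons m (F : seq T -> R) :
  \big[op/idx]_(t : m.+1.-tuple T) F t =
  \big[op/idx]_(x : T) \big[op/idx]_(t : m.-tuple T) F (x :: t).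
Proof.
rewrite pair_big (reindex (fun xt : T * m.-tuple T => [tuple of xt.1 :: xt.2])) //=.
exists (fun t : m.+1.-tuple T => (thead t, [tuple of behead t])).
  by move=> [x t] _; congr (_, _); exact: val_inj.
by move=> t _; rewrite [RHS]tuple_eta; exact: val_inj.
Qed.

End BigTuple.

Section DyckCount.
Local Open Scope ring_scope.

Fixpoint dyck_from (h : int) (s : seq bool) : bool :=
  if s is b :: s' then (0 <= h) && dyck_from (h + (if b then 1 else -1)) s'
  else h == 0.

Lemma height_cons b s : height (b :: s) = (if b then 1 else -1) + height s.
Proof. by rewrite /height; case: b => /=; lia. Qed.

Lemma dyck_fromP h s :
  dyck_from h s <-> h + height s = 0 /\ forall i, 0 <= h + height (take i s).
Proof.
elim: s h => [|b s IHs] h /=.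
  by split=> [/eqP-> | [<- _]] //; rewrite addr0.
rewrite height_cons addrA; split.
  case/andP=> h_ge0 /IHs[end0 prefix_ge0]; split=> // -[|i] /=.
    by rewrite addr0.
  by rewrite height_cons addrA.
case=> end0 prefix_ge0; apply/andP; split.
  by have := prefix_ge0 0%N; rewrite take0 addr0.
apply/IHs; split=> // i.
by have := prefix_ge0 i.+1; rewrite /= height_cons addrA.
Qed.

Lemma is_dyckE s : is_dyck s = dyck_from 0 s.
Proof.
apply/idP/idP.
  case/andP=> /eqP end0 /forallP prefix_ge0; apply/dyck_fromP.
  rewrite add0r; split=> // i; rewrite add0r.
  have [i_le | /ltnW i_gt] := leqP i (size s); first exact: (prefix_ge0 (Ordinal _)).
  by rewrite take_oversize // end0.
case/dyck_fromP; rewrite add0r => end0 prefix_ge0.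
by rewrite /is_dyck end0 eqxx; apply/forallP=> i; have := prefix_ge0 i; rewrite add0r.
Qed.

Definition dyck_count m h : nat := \sum_(t : m.-tuple bool) dyck_from h t.

Lemma dyck_count0 h : dyck_count 0 h = (h == 0).
Proof. by rewrite /dyck_count (big_tuple_nil _ (fun s => nat_of_bool (dyck_from h s))). Qed.

Lemma dyck_countS m h :
  dyck_count m.+1 h =
    if 0 <= h then (dyck_count m (h + 1) + dyck_count m (h - 1))%N else 0%N.
Proof.
rewrite /dyck_count (big_tuple_cons _ _ (fun s => nat_of_bool (dyck_from h s))) big_bool /=.
by case: ifP => h_ge0; last rewrite !big1.
Qed.

Lemma dyck_count_high m h : m%:Z < h -> dyck_count m h = 0%N.
Proof.
elim: m h => [|m IHm] h m_lt_h; first by rewrite dyck_count0; case: eqP => //; lia.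
by rewrite dyck_countS !IHm; [case: ifP | lia | lia].
Qed.

Lemma dyck_count_ballot u d : (u <= d.+1)%N ->
  (dyck_count (u + d) (d%:Z - u%:Z))%:Z = 'C(u + d, d)%:Z - 'C(u + d, d.+1)%:Z.
Proof.
move Em : (u + d)%N => m; elim: m u d Em => [|m IHm] u d.
  by case: u d => [|u] [|d] //= _ _; rewrite dyck_count0.
case: u => [|u] Em u_le.
  rewrite add0n in Em; subst d; rewrite subr0 dyck_countS /= dyck_count_high; last by lia.
  have -> : m.+1%:Z - 1 = m%:Z - 0%:Z by lia.
  by rewrite add0n IHm // !binn !bin_small.
have [d_eq | d_gt] := eqVneq d u.
  subst d; rewrite dyck_countS ifF; last by lia.
  have -> : m.+1 = (u + u.+1)%N by lia.
  by rewrite -[in X in _ - X](bin_sub (leq_addl u u.+1)) addnK subrr.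
case: d d_gt Em u_le => [|d] d_gt Em u_le; first by lia.
rewrite dyck_countS ifT; last by lia.
have -> : d.+1%:Z - u.+1%:Z + 1 = d.+1%:Z - u%:Z by lia.
have -> : d.+1%:Z - u.+1%:Z - 1 = d%:Z - u.+1%:Z by lia.
rewrite PoszD IHm; [|lia|lia]; rewrite IHm; [|lia|lia].
by rewrite !binS !PoszD; lia.
Qed.

Definition first_rise_count m h r : nat :=
  \sum_(t : m.-tuple bool) (dyck_from h t && (first_rise t == r)).

Lemma first_rise_count_closed r m h : 0 <= h ->
  first_rise_count (r + m.+1) h r = dyck_count m (h + r%:Z - 1).
Proof.
rewrite /first_rise_count /first_rise.
elim: r h => [|r IHr] h h_ge0; rewrite (big_tuple_cons _ _
  (fun s => nat_of_bool (dyck_from h s && (find negb s == _)))) big_bool /= h_ge0.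
- rewrite big1 ?add0n => [|t _]; last by rewrite andbF.
  by rewrite addr0; apply: eq_bigr => t _; rewrite andbT.
- rewrite [X in (_ + X)%N]big1 ?addn0 => [|t _]; last by rewrite andbF.
  have -> : h + r.+1%:Z - 1 = h + 1 + r%:Z - 1 by lia.
  rewrite -IHr; last by lia.
  by apply: eq_bigr.
Qed.

Lemma first_rise_count_dyck n r : (0 < n)%N -> (r <= n)%N ->
  (first_rise_count (2 * n) 0 r)%:Z =
  'C((2 * n - r).-1, n.-1)%:Z - 'C((2 * n - r).-1, n)%:Z.
Proof.
move=> n_gt0 r_le; set m := (2 * n - r).-1.
have -> : (2 * n = r + m.+1)%N by rewrite /m; lia.
rewrite first_rise_count_closed //.
have -> : m = (n - r + n.-1)%N by rewrite /m; lia.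
have -> : 0 + r%:Z - 1 = n.-1%:Z - (n - r)%:Z by lia.
by rewrite dyck_count_ballot ?prednK //; lia.
Qed.

End DyckCount.

Lemma first_rise_le_count s : first_rise s <= count id s.
Proof. by elim: s => [|[] s IHs] //=; lia. Qed.

Lemma first_rise_double_le s : is_dyck s -> (first_rise s).*2 <= size s.
Proof.
case/andP => /eqP; rewrite /height => ups_eq_downs _.
have := first_rise_le_count s.
have : count id s + count negb s = size s by exact: count_predC.
lia.
Qed.

Lemma sum_progression_indicator p q n N r :
    (0 < q) -> (r <= n) -> (n <= N) ->
  (\sum_(0 <= k < n.+1 | k * q + p <= n) (r == k * q + p)) =
  [exists k : 'I_N.+1, r == k * q + p].
Proof.
move=> q_gt0 r_le n_le; case: existsP => [[[k0 _] /eqP /= r_def] | no_k].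
  rewrite (eq_bigr (fun k => nat_of_bool (k == k0))) => [|k _]; last first.
    by rewrite r_def eqn_add2r (eqn_pmul2r q_gt0) eq_sym.
  have k0_le : k0 <= k0 * q by rewrite leq_pmulr.
  by rewrite -big_mkcondr /= big_nat1_cond_eq ifT //; lia.
rewrite big_nat_cond big1 // => k /andP[/andP[_ k_lt] _].
case: eqP => // r_def; case: no_k.
have k_lt' : k < N.+1 by lia.
by exists (Ordinal k_lt'); apply/eqP.
Qed.

Lemma card_F_set n p q : 0 < q ->
  #|F_set n p q| =
  \sum_(0 <= k < n.+1 | k * q + p <= n) first_rise_count (2 * n) 0 (k * q + p).
Proof.
move=> q_gt0; rewrite -sum1_card big_mkcond /= /first_rise_count exchange_big /=.
apply: eq_bigr => t _; rewrite inE -is_dyckE.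
have [dyck_t | _] /= := boolP (is_dyck t); last by rewrite big1.
have first_rise_le : first_rise t <= n.
  by have := first_rise_double_le dyck_t; rewrite size_tuple; lia.
by rewrite (@sum_progression_indicator _ _ _ (2 * n)) //; lia.
Qed.

Theorem mainTheorem1 (p q n : nat) (hpq : (p < q)%N) (hn : (1 <= n)%N) :
  (#|F_set n p q|%:Z =
   \sum_(0 <= k < n.+1 | (k * q + p <= n)%N)
     (('C((2 * n - (k * q + p)).-1, n.-1))%:Z
      - ('C((2 * n - (k * q + p)).-1, n))%:Z))%R.
Proof.
rewrite card_F_set; last by lia.
rewrite (big_morph Posz PoszD (erefl (0 : int))).
by apply: eq_bigr => k r_le; rewrite first_rise_count_dyck.
Qed.
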